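(* Let $S$ be a uniquely $2$-divisible inverse semigroup and let $\alpha$ be an automorphism of $S$ satisfying $\alpha^2 = 1$ and $\mathrm{Fix}(\alpha) = E(S)$. Then $x\alpha = x^{-1}$ for all $x\in S$, and consequently $S$ is commutative.
   Context: A semigroup $S$ is uniquely $2$-divisible if the squaring map $S\to S$, $x\mapsto x^2$, is a bijection. $E(S)$ denotes the set of idempotents of $S$; for an automorphism $\alpha$ of $S$ (written on the right, $x\mapsto x\alpha$), $\mathrm{Fix}(\alpha) = \{x\in S \mid x\alpha = x\}$. In an inverse semigroup, $x^{-1}$ denotes the unique inverse of $x$ (the unique element with $xx^{-1}x=x$ and $x^{-1}xx^{-1}=x^{-1}$). *)

From Stdlib Require Import Classical.

Definition associative {S : Type} (mul : S -> S -> S) : Prop :=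
  forall x y z, mul x (mul y z) = mul (mul x y) z.

Definition is_inverse {S : Type} (mul : S -> S -> S) (x y : S) : Prop :=
  mul (mul x y) x = x /\ mul (mul y x) y = y.

Definition inverse_semigroup {S : Type} (mul : S -> S -> S) : Prop :=
  associative mul /\ forall x, exists y, is_inverse mul x y /\
    forall z, is_inverse mul x z -> z = y.

Definition bijective_map {A B : Type} (f : A -> B) : Prop :=
  (forall x y, f x = f y -> x = y) /\ (forall b, exists a, f a = b).

Definition uniquely_2_divisible {S : Type} (mul : S -> S -> S) : Prop :=
  bijective_map (fun x => mul x x).

Definition idempotent {S : Type} (mul : S -> S -> S) (e : S) : Prop :=
  mul e e = e.

Definition automorphism {S : Type} (mul : S -> S -> S) (a : S -> S) : Prop :=
  bijective_map a /\ forall x y, a (mul x y) = mul (a x) (a y).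

From Stdlib Require Import ClassicalEpsilon.

(* Write x' for the unique inverse of x.  Now let alpha be an involutive automorphism whose fixed
   points are exactly the idempotents, and call x "inverted" when x alpha = x'.
   - A square root of an inverted element is inverted, because squaring is
     injective and (s alpha)^2 = (s^2)' = (s')^2.
   - An inverted s is "normal": s s' = (s s') alpha = s' s.
   - For any x, the element a = x'(x alpha) is inverted; write a = s^2 with s
     inverted.  Then h = x s satisfies h alpha = h, so h is idempotent, and a
     short computation gives h = s's and then x = s', which is inverted.
   Hence alpha is inversion; as alpha is multiplicative and inversion is
   anti-multiplicative, x'y' = y'x' for all x, y, i.e. S is commutative. *)

Section InverseSemigroup.
Variables (S : Type) (mul : S -> S -> S) (inv : S -> S).
Hypothesis mulA : associative mul.
Hypothesis inv_spec : forall x, is_inverse mul x (inv x).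
Hypothesis inv_unique : forall x y, is_inverse mul x y -> y = inv x.

Local Infix "·" := mul (at level 40, left associativity).

Lemma inv_left x : x · (inv x · x) = x.
Proof. rewrite mulA; apply inv_spec. Qed.

Lemma inv_right x : inv x · (x · inv x) = inv x.
Proof. rewrite mulA; apply inv_spec. Qed.

Lemma inv_involutive x : inv (inv x) = x.
Proof.
  symmetry; apply inv_unique.
  destruct (inv_spec x) as [H1 H2]; split; assumption.
Qed.

Lemma idempotent_inv e : idempotent mul e -> inv e = e.
Proof. intro He; symmetry; apply inv_unique; split; rewrite !He; reflexivity. Qed.

Lemma idempotent_range x : idempotent mul (x · inv x).
Proof. unfold idempotent; rewrite mulA, (proj1 (inv_spec x)); reflexivity. Qed.

Lemma idempotent_domain x : idempotent mul (inv x · x).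
Proof. unfold idempotent; rewrite mulA, (proj2 (inv_spec x)); reflexivity. Qed.

(* The product of two idempotents is idempotent: the inverse a of e f equals
   f a e (another inverse of e f), whence a a = a and e f = a' = a. *)
Lemma idempotent_mul e f :
  idempotent mul e -> idempotent mul f -> idempotent mul (e · f).
Proof.
  unfold idempotent; intros He Hf.
  set (a := inv (e · f)).
  destruct (inv_spec (e · f)) as [H1 H2]; fold a in H1, H2.
  rewrite <- !mulA in H1, H2.
  assert (He' : forall z, e · (e · z) = e · z) by (intro z; rewrite mulA, He; reflexivity).
  assert (Hf' : forall z, f · (f · z) = f · z) by (intro z; rewrite mulA, Hf; reflexivity).
  assert (H2' : forall z, a · (e · (f · (a · z))) = a · z)
    by (intro z; rewrite (mulA f a z), (mulA e _ z), (mulA a _ z), H2; reflexivity).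
  assert (Ha : f · (a · e) = a).
  { apply inv_unique; split; rewrite <- !mulA.
    - rewrite Hf', He'; exact H1.
    - rewrite He', Hf', H2'; reflexivity. }
  assert (Haa : a · a = a).
  { rewrite <- Ha at 1 2; rewrite <- !mulA, H2'; exact Ha. }
  assert (Hef : e · f = a).
  { rewrite <- (inv_involutive (e · f)); apply idempotent_inv; exact Haa. }
  rewrite Hef; exact Haa.
Qed.

(* Idempotents commute: f e is an inverse of the idempotent e f, which is
   its own (unique) inverse. *)
Lemma idempotents_commute e f :
  idempotent mul e -> idempotent mul f -> e · f = f · e.
Proof.
  intros He Hf.
  pose proof (idempotent_mul e f He Hf) as Hef.
  pose proof (idempotent_mul f e Hf He) as Hfe.
  unfold idempotent in *.
  rewrite <- (idempotent_inv _ Hef); symmetry; apply inv_unique; split.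
  - transitivity ((e · (f · f)) · (e · e) · f); [ rewrite <- !mulA; reflexivity |].
    rewrite He, Hf, <- mulA; exact Hef.
  - transitivity ((f · (e · e)) · (f · f) · e); [ rewrite <- !mulA; reflexivity |].
    rewrite He, Hf, <- mulA; exact Hfe.
Qed.

Lemma inv_mul x y : inv (x · y) = inv y · inv x.
Proof.
  symmetry; apply inv_unique.
  pose proof (idempotents_commute _ _ (idempotent_range y) (idempotent_domain x)) as C.
  split.
  - transitivity (x · ((y · inv y) · (inv x · x)) · y); [ rewrite <- !mulA; reflexivity |].
    rewrite C, <- !mulA, (mulA (inv x) x), (mulA x (inv x · x)), !inv_left.
    reflexivity.
  - transitivity (inv y · ((inv x · x) · (y · inv y)) · inv x); [ rewrite <- !mulA; reflexivity |].
    rewrite <- C, <- !mulA, (mulA y (inv y)), (mulA (inv y) (y · inv y)), !inv_right.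
    reflexivity.
Qed.

End InverseSemigroup.

Section InvertingAutomorphism.
Variables (S : Type) (mul : S -> S -> S) (inv : S -> S) (alpha : S -> S).
Hypothesis mulA : associative mul.
Hypothesis inv_spec : forall x, is_inverse mul x (inv x).
Hypothesis inv_unique : forall x y, is_inverse mul x y -> y = inv x.
Hypothesis square_injective : forall x y, mul x x = mul y y -> x = y.
Hypothesis square_surjective : forall a, exists s, mul s s = a.
Hypothesis alpha_mul : forall x y, alpha (mul x y) = mul (alpha x) (alpha y).
Hypothesis alpha_involutive : forall x, alpha (alpha x) = x.
Hypothesis alpha_fixed : forall x, alpha x = x <-> idempotent mul x.

Local Infix "·" := mul (at level 40, left associativity).

Let inv_left := inv_left S mul inv mulA inv_spec.
Let inv_right := inv_right S mul inv mulA inv_spec.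
Let inv_involutive := inv_involutive S mul inv inv_spec inv_unique.
Let idempotent_inv := idempotent_inv S mul inv inv_unique.
Let idempotent_range := idempotent_range S mul inv mulA inv_spec.
Let inv_mul := inv_mul S mul inv mulA inv_spec inv_unique.

Definition inverted (x : S) : Prop := alpha x = inv x.

Lemma alpha_inv x : alpha (inv x) = inv (alpha x).
Proof.
  apply inv_unique; destruct (inv_spec x) as [H1 H2].
  split; rewrite <- !alpha_mul; congruence.
Qed.

Lemma alpha_idempotent e : idempotent mul e -> alpha e = e.
Proof. apply alpha_fixed. Qed.

(* By injectivity of squaring: (s alpha)^2 = (s^2)' = (s')^2. *)
Lemma inverted_sqrt s : inverted (s · s) -> inverted s.
Proof.
  unfold inverted; intro Hs; apply square_injective.
  rewrite <- alpha_mul, Hs; apply inv_mul.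
Qed.

Lemma inverted_normal s : inverted s -> s · inv s = inv s · s.
Proof.
  unfold inverted; intro Hs.
  rewrite <- (alpha_idempotent _ (idempotent_range s)).
  rewrite alpha_mul, alpha_inv, Hs, inv_involutive.
  reflexivity.
Qed.

(* x and x alpha have the same range idempotent, since x x' is fixed. *)
Lemma range_alpha x : x · inv x = alpha x · inv (alpha x).
Proof.
  rewrite <- alpha_inv, <- alpha_mul; symmetry.
  apply alpha_idempotent, idempotent_range.
Qed.

Definition quotient (x : S) : S := inv x · alpha x.

Lemma quotient_inverted x : inverted (quotient x).
Proof.
  unfold inverted, quotient.
  rewrite alpha_mul, alpha_inv, alpha_involutive, inv_mul, inv_involutive.
  reflexivity.
Qed.

Lemma mul_quotient x : x · quotient x = alpha x.
Proof. unfold quotient; rewrite mulA, range_alpha; apply inv_spec. Qed.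

Lemma quotient_range x : quotient x · inv (quotient x) = inv x · x.
Proof.
  unfold quotient.
  rewrite inv_mul, inv_involutive.
  transitivity (inv x · (alpha x · inv (alpha x)) · x); [ rewrite <- !mulA; reflexivity |].
  rewrite <- range_alpha, inv_right; reflexivity.
Qed.

(* The heart of the argument: with q = x'(x alpha) = s^2 and h = x s, h is
   fixed by alpha, hence idempotent, which forces h = s's and x = s'. *)
Lemma alpha_inverts x : inverted x.
Proof.
  destruct (square_surjective (quotient x)) as [s s_square].
  assert (s_inverted : inverted s).
  { apply inverted_sqrt; rewrite s_square; apply quotient_inverted. }
  assert (s_absorbs : s · (s · inv s) = s).
  { rewrite (inverted_normal s s_inverted); apply inv_left. }
  assert (x_domain : inv x · x = s · inv s).
  { rewrite <- quotient_range, <- s_square, inv_mul.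
    transitivity (s · (s · inv s) · inv s); [ rewrite <- !mulA; reflexivity |].
    rewrite s_absorbs; reflexivity. }
  assert (h_idempotent : idempotent mul (x · s)).
  { apply alpha_fixed.
    rewrite alpha_mul, s_inverted, <- mul_quotient, <- s_square, <- !mulA, s_absorbs.
    reflexivity. }
  assert (h_domain : inv (x · s) · (x · s) = inv s · s).
  { rewrite inv_mul, <- mulA, (mulA (inv x) x s), x_domain, <- (mulA s), inv_left.
    reflexivity. }
  assert (h_value : x · s = inv s · s).
  { rewrite <- h_domain, (idempotent_inv _ h_idempotent).
    symmetry; exact h_idempotent. }
  assert (x_value : x = inv s).
  { rewrite <- (inv_left x), x_domain, mulA, h_value, <- mulA; apply inv_right. }
  unfold inverted; rewrite x_value, alpha_inv, s_inverted; reflexivity.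
Qed.

(* alpha is a homomorphism and inversion an anti-homomorphism, so if they
   coincide then inverses commute; as inversion is onto, S is commutative. *)
Lemma commutative x y : x · y = y · x.
Proof.
  assert (inverses_commute : forall u v, inv u · inv v = inv v · inv u).
  { intros u v.
    rewrite <- (alpha_inverts u), <- (alpha_inverts v), <- alpha_mul, alpha_inverts,
      inv_mul, !alpha_inverts.
    reflexivity. }
  rewrite <- (inv_involutive x), <- (inv_involutive y).
  apply inverses_commute.
Qed.
End InvertingAutomorphism.

Lemma inverse_function (S : Type) (mul : S -> S -> S) :
  inverse_semigroup mul ->
  exists inv : S -> S, (forall x, is_inverse mul x (inv x)) /\
                       (forall x y, is_inverse mul x y -> y = inv x).
Proof.
  intros [_ inverse_exists].
  exists (fun x => proj1_sig (constructive_indefinite_description _ (inverse_exists x))).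
  split; intro x; destruct (constructive_indefinite_description _ (inverse_exists x))
    as [y [Hy y_unique]]; simpl; [ exact Hy | exact y_unique ].
Qed.

Theorem theorem1p4 (S : Type) (mul : S -> S -> S) (alpha : S -> S)
  (HS : inverse_semigroup mul)
  (H2 : uniquely_2_divisible mul)
  (Ha : automorphism mul alpha)
  (Hinv : forall x, alpha (alpha x) = x)
  (Hfix : forall x, alpha x = x <-> idempotent mul x) :
  (forall x, is_inverse mul x (alpha x)) /\
  (forall x y, mul x y = mul y x).
Proof.
  destruct (inverse_function S mul HS) as [inv [inv_spec inv_unique]].
  destruct HS as [mulA _].
  destruct H2 as [square_injective square_surjective].
  destruct Ha as [_ alpha_mul].
  split.
  - intro x.
    rewrite (alpha_inverts S mul inv alpha mulA inv_spec inv_unique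
               square_injective square_surjective alpha_mul Hinv Hfix x).
    apply inv_spec.
  - exact (commutative S mul inv alpha mulA inv_spec inv_unique
             square_injective square_surjective alpha_mul Hinv Hfix).
Qed.
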